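(* Let $k\ge 2$ be even, let $\mathscr{A}\in\mathbb{R}^{n\times n\times\cdots\times n}$ be a $k$th-order $n$-dimensional tensor and $\mathbf{B}\in\mathbb{R}^{n\times m}$, and consider the system $\dot{\mathbf{x}}(t)=\mathscr{A}\mathbf{x}(t)^{k-1}+\mathbf{B}\mathbf{u}(t)$. (i) If the pair $(\mathscr{A},\mathbf{B})$ is controllable, then there exists $\varepsilon>0$ such that every pair $(\tilde{\mathscr{A}},\tilde{\mathbf{B}})$ (of the same sizes) with $\|\tilde{\mathscr{A}}-\mathscr{A}\|<\varepsilon$ and $\|\tilde{\mathbf{B}}-\mathbf{B}\|<\varepsilon$ is also controllable. (ii) If $(\mathscr{A},\mathbf{B})$ is not controllable, then for every $\varepsilon>0$ there exists a controllable pair $(\tilde{\mathscr{A}},\tilde{\mathbf{B}})$ with $\|\tilde{\mathscr{A}}-\mathscr{A}\|<\varepsilon$ and $\|\tilde{\mathbf{B}}-\mathbf{B}\|<\varepsilon$.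
   Context: For a $k$th-order tensor $\mathscr{A}$ and vectors $\mathbf{v}_1,\dots,\mathbf{v}_{k-1}\in\mathbb{R}^n$, $\mathscr{A}\mathbf{v}_1\mathbf{v}_2\cdots\mathbf{v}_{k-1}\in\mathbb{R}^n$ denotes the vector with entries $\sum_{j_2,\dots,j_k}\mathscr{A}_{i j_2\cdots j_k}(\mathbf{v}_1)_{j_2}\cdots(\mathbf{v}_{k-1})_{j_k}$, and $\mathscr{A}\mathbf{x}^{k-1}$ is this with all $\mathbf{v}_i=\mathbf{x}$. Norms are standard (e.g. Frobenius) norms on tensors and matrices. The nonlinear controllability matrix of $(\mathscr{A},\mathbf{B})$ is $\mathbf{C}=[\mathbf{M}_0\ \mathbf{M}_1\ \cdots\ \mathbf{M}_{n-1}]$, where $\mathbf{M}_0=\mathbf{B}$ and, for $j=1,\dots,n-1$, the columns of $\mathbf{M}_j$ are formed from the set $\{\mathscr{A}\mathbf{v}_1\mathbf{v}_2\cdots\mathbf{v}_{k-1} : \mathbf{v}_i\in\operatorname{span}[\mathbf{M}_0\ \cdots\ \mathbf{M}_{j-1}],\ i=1,\dots,k-1\}$ (so that the column span of $\mathbf{C}$ equals the span of all such vectors generated iteratively). The pair $(\mathscr{A},\mathbf{B})$ (equivalently the system) is called controllable (strongly controllable) if $\operatorname{rank}\mathbf{C}=n$. *)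

From HB Require Import structures.
From mathcomp Require Import all_boot all_order all_algebra.
From mathcomp Require Import reals.
Set Implicit Arguments. Unset Strict Implicit. Unset Printing Implicit Defensive.
Import Order.TTheory GRing.Theory Num.Theory.
Local Open Scope ring_scope.

(* A k-th order n-dimensional real tensor: entry  A i j  with i the first
   index and j : 'I_k.-1 -> 'I_n the remaining k-1 indices (j_2,...,j_k). *)
Definition tensor (R : Type) (k n : nat) :=
  'I_n -> {ffun 'I_k.-1 -> 'I_n} -> R.

Definition tapp (R : ringType) (k n : nat) (A : tensor R k n)
  (v : 'I_k.-1 -> 'rV[R]_n) : 'rV[R]_n :=
  \row_i \sum_(j : {ffun 'I_k.-1 -> 'I_n}) A i j * \prod_(l < k.-1) v l 0 (j l).

(* Row-space (as a square matrix, mxalgebra) of span[M_0 ... M_j] of the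
   nonlinear controllability matrix. *)
Fixpoint ctrl_space (R : fieldType) (k n m : nat) (A : tensor R k n)
  (B : 'M[R]_(n, m)) (j : nat) : 'M[R]_n :=
  match j with
  | 0 => <<B^T>>%MS
  | j'.+1 =>
      let W := ctrl_space A B j' in
      (W + \sum_(t : {ffun 'I_k.-1 -> 'I_n})
              <<tapp A (fun l => row (t l) W)>>)%MS
  end.

Definition controllable (R : fieldType) (k n m : nat) (A : tensor R k n)
  (B : 'M[R]_(n, m)) : Prop :=
  \rank (ctrl_space A B n.-1) = n.

Definition tensor_dist (R : rcfType) (k n : nat) (A1 A2 : tensor R k n) : R :=
  Num.sqrt (\sum_(i < n) \sum_(j : {ffun 'I_k.-1 -> 'I_n}) (A1 i j - A2 i j) ^+ 2).

Definition mx_dist (R : rcfType) (n m : nat) (B1 B2 : 'M[R]_(n, m)) : R :=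
  Num.sqrt (\sum_(i < n) \sum_(j < m) (B1 i j - B2 i j) ^+ 2).

From HB Require Import structures.
From mathcomp Require Import all_boot all_order all_algebra.
From mathcomp Require Import reals.
From mathcomp Require Import ring lra.
Set Implicit Arguments. Unset Strict Implicit. Unset Printing Implicit Defensive.
Import Order.TTheory GRing.Theory Num.Theory.
Local Open Scope ring_scope.

(* The span of [M_0 ... M_j] is also the row space of an explicit matrix
   whose entries are polynomials in the entries of A and B: apply A to all
   (k-1)-tuples of rows of the previous stage.  Hence controllability means
   that some n x n minor of this matrix (for j = n-1) is nonzero.
   (i) Such a minor is continuous in (A, B), so it stays nonzero nearby.
   (ii) Along the segment from (A, B) to the controllable "shift" pair
   (A1, B1), with A1 e_p^(k-1) = e_(p+1) and B1 = e_0, the minor that is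
   nonzero at (A1, B1) is a nonzero polynomial in the segment parameter s,
   so it vanishes for finitely many s only and arbitrarily small s work. *)

Section Tapp.
Variables (R : comNzRingType) (k n : nat).
Implicit Types (A : tensor R k n) (v w : 'I_k.-1 -> 'rV[R]_n).

Lemma eq_tapp A v w : (forall l, v l = w l) -> tapp A v = tapp A w.
Proof.
move=> vw; apply/rowP => i; rewrite !mxE; apply: eq_bigr => j _.
by congr (_ * _); apply: eq_bigr => l _; rewrite vw.
Qed.

Lemma tapp_mulmx A p (x : 'I_k.-1 -> 'rV[R]_p) (X : 'M[R]_(p, n)) :
  tapp A (fun l => x l *m X) =
  \sum_(g : {ffun 'I_k.-1 -> 'I_p})
     (\prod_l x l 0 (g l)) *: tapp A (fun l => row (g l) X).
Proof.
apply/rowP => r; rewrite !mxE summxE.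
under eq_bigr => j _ do under eq_bigr => l _ do rewrite mxE.
under eq_bigr => j _ do rewrite bigA_distr_bigA big_distrr /=.
rewrite exchange_big; apply: eq_bigr => g _; rewrite !mxE mulr_sumr.
apply: eq_bigr => j _; rewrite big_split /= !mulrA [_ * A r j]mulrC.
by congr (_ * _); apply: eq_bigr => l _; rewrite mxE.
Qed.

Lemma map_tapp (S : comNzRingType) (phi : {rmorphism R -> S}) A v :
  map_mx phi (tapp A v) = tapp (fun i j => phi (A i j)) (fun l => map_mx phi (v l)).
Proof.
apply/rowP => r; rewrite !mxE rmorph_sum; apply: eq_bigr => j _.
by rewrite rmorphM rmorph_prod; congr (_ * _); apply: eq_bigr => l _; rewrite mxE.
Qed.

End Tapp.

Lemma tapp_sub (F : fieldType) k n p q (A : tensor F k n) (X : 'M[F]_(p, n))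
    (S : 'M[F]_(q, n)) (v : 'I_k.-1 -> 'rV[F]_n) :
  (forall g : 'I_k.-1 -> 'I_p, (tapp A (fun l => row (g l) X) <= S)%MS) ->
  (forall l, (v l <= X)%MS) -> (tapp A v <= S)%MS.
Proof.
move=> sAS svX; rewrite -(eq_tapp A (fun l => mulmxKpV (svX l))).
rewrite tapp_mulmx summx_sub // => g _; exact/scalemx_sub/sAS.
Qed.

Definition tapp_mx (R : comNzRingType) k n p (A : tensor R k n) (X : 'M[R]_(p, n)) :
    'M[R]_(#|{ffun 'I_k.-1 -> 'I_p}|, n) :=
  \matrix_t tapp A (fun l => row ((enum_val t : {ffun _ -> _}) l) X).

Lemma tapp_mx_row (R : comNzRingType) k n p (A : tensor R k n) (X : 'M[R]_(p, n))
    (g : 'I_k.-1 -> 'I_p) :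
  tapp A (fun l => row (g l) X) = row (enum_rank [ffun l => g l]) (tapp_mx A X).
Proof. by rewrite rowK enum_rankK; under [RHS]eq_tapp do rewrite ffunE. Qed.

Fixpoint ctrl_rows (k m j : nat) : nat :=
  if j is j'.+1 then ctrl_rows k m j' + #|{ffun 'I_k.-1 -> 'I_(ctrl_rows k m j')}|
  else m.

Fixpoint ctrl_mx (R : comNzRingType) k n m (A : tensor R k n) (B : 'M[R]_(n, m))
    (j : nat) : 'M[R]_(ctrl_rows k m j, n) :=
  if j is j'.+1 return 'M_(ctrl_rows k m j, n) then
    let K := ctrl_mx A B j' in col_mx K (tapp_mx A K)
  else B^T.

Lemma map_ctrl_mx (R S : comNzRingType) (phi : {rmorphism R -> S}) k n m
    (A : tensor R k n) (B : 'M[R]_(n, m)) (A' : tensor S k n) (B' : 'M[S]_(n, m)) :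
  (forall i j, phi (A i j) = A' i j) -> map_mx phi B = B' ->
  forall j, map_mx phi (ctrl_mx A B j) = ctrl_mx A' B' j.
Proof.
move=> AA' BB'; elim=> [|j IHj] /=; first by rewrite -map_trmx BB'.
rewrite map_col_mx IHj; congr col_mx; apply/row_matrixP => t.
rewrite -map_row !rowK map_tapp; under eq_tapp do rewrite map_row IHj.
by apply/rowP => r; rewrite !mxE; under eq_bigr do rewrite AA'.
Qed.

Section CtrlSpace.
Variables (F : fieldType) (k n m : nat) (A : tensor F k n) (B : 'M[F]_(n, m)).

Lemma ctrl_space_S j : (ctrl_space A B j <= ctrl_space A B j.+1)%MS.
Proof. exact: addsmxSl. Qed.

Lemma ctrl_space_le i j : (i <= j)%N -> (ctrl_space A B i <= ctrl_space A B j)%MS.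
Proof.
move/subnK <-; elim: (j - i)%N => [|d IHd] //.
exact: submx_trans IHd (ctrl_space_S _).
Qed.

Lemma tapp_ctrl_space j (v : 'I_k.-1 -> 'rV[F]_n) :
  (forall l, (v l <= ctrl_space A B j)%MS) -> (tapp A v <= ctrl_space A B j.+1)%MS.
Proof.
apply: tapp_sub => g; apply: submx_trans (addsmxSr _ _).
apply: (sumsmx_sup [ffun l => g l]) => //; rewrite genmxE -/(ctrl_space A B j).
by under [X in (_ <= X)%MS]eq_tapp do rewrite ffunE.
Qed.

Lemma ctrl_mx_eqmx j : (ctrl_mx A B j == ctrl_space A B j)%MS.
Proof.
elim: j => [|j IHj] /=; first exact/eqmxP/eqmx_sym/genmxE.
have [sKW sWK] := andP IHj; apply/andP; split.
  rewrite col_mx_sub (submx_trans sKW (ctrl_space_S _)) /=.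
  apply/row_subP => t; rewrite rowK; apply: tapp_ctrl_space => l.
  exact: submx_trans (row_sub _ _) sKW.
rewrite addsmx_sub; apply/andP; split.
  by apply: submx_trans sWK _; rewrite -addsmxE addsmxSl.
apply/sumsmx_subP => t _; rewrite genmxE.
apply: tapp_sub (fun l => submx_trans (row_sub _ _) sWK) => g.
rewrite -addsmxE; apply: submx_trans (addsmxSr _ _).
by rewrite tapp_mx_row row_sub.
Qed.

End CtrlSpace.

Lemma row_full_minorP (F : fieldType) p n (M : 'M[F]_(p, n)) :
  row_full M <-> exists f : 'I_n -> 'I_p, \det (rowsub f M) != 0.
Proof.
split=> [fullM | [f detf]].
  by exists (fullrankfun fullM); rewrite -unitfE -unitmxE fullrowsub_unit.
rewrite /row_full eqn_leq rank_leq_col -{1}(mxrank_unit (_ : rowsub f M \in unitmx)).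
  exact/mxrankS/rowsub_sub.
by rewrite unitmxE unitfE.
Qed.

Lemma controllable_minorP (F : fieldType) k n m (A : tensor F k n) (B : 'M[F]_(n, m)) :
  controllable A B <->
  exists f : 'I_n -> 'I_(ctrl_rows k m n.-1), \det (rowsub f (ctrl_mx A B n.-1)) != 0.
Proof.
rewrite -row_full_minorP /row_full /controllable (eqmx_rank (ctrl_mx_eqmx A B n.-1)).
by split=> /eqP.
Qed.

Section Continuity.
Variables (R : realType) (k n m : nat) (A0 : tensor R k n) (B0 : 'M[R]_(n, m)).

Definition cont_at (F : tensor R k n -> 'M[R]_(n, m) -> R) :=
  forall e : R, 0 < e -> exists2 d : R, 0 < d & forall A B,
    tensor_dist A A0 < d -> mx_dist B B0 < d -> `|F A B - F A0 B0| < e.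

Lemma cont_at_ext F G : (forall A B, F A B = G A B) -> cont_at F -> cont_at G.
Proof.
move=> FG contF e e_gt0; have [d d_gt0 near] := contF e e_gt0.
by exists d => // A B dA dB; rewrite -!FG; exact: near.
Qed.

Lemma cont_at_const c : cont_at (fun _ _ => c).
Proof. by move=> e e_gt0; exists 1 => // A B _ _; rewrite subrr normr0. Qed.

Lemma cont_atD F G : cont_at F -> cont_at G -> cont_at (fun A B => F A B + G A B).
Proof.
move=> contF contG e e_gt0; have e2_gt0 : 0 < e / 2 by rewrite divr_gt0.
have [d1 d1_gt0 near1] := contF _ e2_gt0; have [d2 d2_gt0 near2] := contG _ e2_gt0.
exists (Num.min d1 d2) => [|A B]; first by rewrite lt_min d1_gt0 d2_gt0.
rewrite !lt_min => /andP[dA1 dA2] /andP[dB1 dB2].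
rewrite opprD addrACA (splitr e); apply: le_lt_trans (ler_normD _ _) _.
by rewrite ltrD ?near1 ?near2.
Qed.

Lemma cont_atM F G : cont_at F -> cont_at G -> cont_at (fun A B => F A B * G A B).
Proof.
move=> contF contG e e_gt0.
set M := `|F A0 B0| + `|G A0 B0| + 1.
have M_gt0 : 0 < M by rewrite ltr_pwDr // addr_ge0.
set a := Num.min 1 (e / M).
have a_gt0 : 0 < a by rewrite lt_min ltr01 divr_gt0.
have a_le1 : a <= 1 by rewrite ge_min lexx.
have aM_le : a * M <= e by rewrite -ler_pdivlMr // ge_min lexx orbT.
have [d1 d1_gt0 near1] := contF _ a_gt0; have [d2 d2_gt0 near2] := contG _ a_gt0.
exists (Num.min d1 d2) => [|A B]; first by rewrite lt_min d1_gt0 d2_gt0.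
rewrite !lt_min => /andP[dA1 dA2] /andP[dB1 dB2].
have := near1 A B dA1 dB1; have := near2 A B dA2 dB2.
set x := F A B - F A0 B0; set y := G A B - G A0 B0.
have -> : F A B * G A B - F A0 B0 * G A0 B0 = x * y + F A0 B0 * y + x * G A0 B0.
  by rewrite /x /y; ring.
move=> y_lt x_lt; apply: le_lt_trans (ler_normD _ _) _.
apply: le_lt_trans (lerD (ler_normD _ _) (lexx _)) _; rewrite !normrM.
have := normr_ge0 x; have := normr_ge0 y.
have := normr_ge0 (F A0 B0); have := normr_ge0 (G A0 B0).
move: aM_le; rewrite /M; nra.
Qed.

Lemma cont_at_sum (I : finType) F :
  (forall i : I, cont_at (F i)) -> cont_at (fun A B => \sum_i F i A B).
Proof.
move=> contF; elim: (index_enum I) => [|i r IHr].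
  by apply: cont_at_ext (cont_at_const 0) => A B; rewrite big_nil.
by apply: cont_at_ext (cont_atD (contF i) IHr) => A B; rewrite big_cons.
Qed.

Lemma cont_at_prod (I : finType) F :
  (forall i : I, cont_at (F i)) -> cont_at (fun A B => \prod_i F i A B).
Proof.
move=> contF; elim: (index_enum I) => [|i r IHr].
  by apply: cont_at_ext (cont_at_const 1) => A B; rewrite big_nil.
by apply: cont_at_ext (cont_atM (contF i) IHr) => A B; rewrite big_cons.
Qed.

Lemma cont_at_det p (M : tensor R k n -> 'M[R]_(n, m) -> 'M[R]_p) :
  (forall i j, cont_at (fun A B => M A B i j)) -> cont_at (fun A B => \det (M A B)).
Proof.
move=> contM; apply: cont_at_sum => s.
apply/cont_atM/cont_at_prod => [|i]; [exact: cont_at_const | exact: contM].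
Qed.

Lemma ler_sqrt_sum_sqr (I J : finType) (x : I -> J -> R) i j :
  `|x i j| <= Num.sqrt (\sum_i \sum_j x i j ^+ 2).
Proof.
have sqr_sum_ge0 (P : pred J) i' : 0 <= \sum_(j | P j) x i' j ^+ 2.
  by apply: sumr_ge0 => *; exact: sqr_ge0.
rewrite -sqrtr_sqr ler_sqrt; last by apply: sumr_ge0 => *.
rewrite (bigD1 i) //= (bigD1 j) //= -addrA lerDl addr_ge0 //.
by apply: sumr_ge0 => *.
Qed.

Lemma cont_at_tensor_entry i j : cont_at (fun A _ => A i j).
Proof.
move=> e e_gt0; exists e => // A B dA _; apply: le_lt_trans dA.
exact: (ler_sqrt_sum_sqr (fun i j => A i j - A0 i j)).
Qed.

Lemma cont_at_mx_entry i j : cont_at (fun _ B => B i j).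
Proof.
move=> e e_gt0; exists e => // A B _ dB; apply: le_lt_trans dB.
exact: (ler_sqrt_sum_sqr (fun (i : 'I_n) (j : 'I_m) => B i j - B0 i j)).
Qed.

Lemma cont_at_ctrl_mx j i r : cont_at (fun A B => ctrl_mx A B j i r).
Proof.
elim: j i r => [|j IHj] i r /=.
  by apply: cont_at_ext (cont_at_mx_entry r i) => A B; rewrite mxE.
rewrite -(splitK i); case: (split i) => t /=.
  by apply: cont_at_ext (IHj t r) => A B; rewrite col_mxEu.
apply: cont_at_ext (cont_at_sum (fun g => cont_atM (cont_at_tensor_entry r g)
   (cont_at_prod (fun l => IHj ((enum_val t : {ffun _ -> _}) l) (g l))))) => A B.
rewrite col_mxEd /tapp_mx !mxE; apply: eq_bigr => g _.
by congr (_ * _); apply: eq_bigr => l _; rewrite mxE.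
Qed.

End Continuity.

Lemma controllable_nbhs (R : realType) k n m (A : tensor R k n) (B : 'M[R]_(n, m)) :
  controllable A B -> exists eps : R, 0 < eps /\
    forall At Bt, tensor_dist At A < eps -> mx_dist Bt B < eps -> controllable At Bt.
Proof.
move=> /controllable_minorP [f detf]; rewrite -normr_gt0 in detf.
have cont_det_minor : cont_at A B (fun At Bt => \det (rowsub f (ctrl_mx At Bt n.-1))).
  apply: cont_at_det => i r.
  by apply: cont_at_ext (cont_at_ctrl_mx A B (f i) r) => At Bt; rewrite mxE.
have [d d_gt0 near] := cont_det_minor _ detf.
exists d; split => // At Bt dA dB; apply/controllable_minorP; exists f.
by apply: contraTneq (near At Bt dA dB) => ->; rewrite sub0r normrN ltxx.
Qed.

Definition shift_tensor (R : pzRingType) k n : tensor R k n :=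
  fun i j => \prod_l ((j l).+1 == i :> nat)%:R.

Definition first_unit_mx (R : pzRingType) n m : 'M[R]_(n, m) :=
  \matrix_(i, c) ((i == 0 :> nat) && (c == 0 :> nat))%:R.

Arguments shift_tensor : clear implicits.
Arguments first_unit_mx : clear implicits.

Section Shift.
Variables (F : fieldType) (k n m : nat).
Hypotheses (k_gt1 : (1 < k)%N) (m_gt0 : (0 < m)%N).

Let unit_row p : 'rV[F]_n := \row_r (r == p :> nat)%:R.

Lemma tapp_shift p : (p < n)%N ->
  tapp (shift_tensor F k n) (fun _ => unit_row p) = unit_row p.+1.
Proof.
move=> p_lt_n; apply/rowP => r; rewrite !mxE.
transitivity (\sum_(j : {ffun 'I_k.-1 -> 'I_n})
    \prod_l (((j l).+1 == r :> nat)%:R * (j l == p :> nat)%:R : F)).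
  apply: eq_bigr => j _; rewrite /shift_tensor -big_split /=.
  by apply: eq_bigr => l _; rewrite mxE.
rewrite -(bigA_distr_bigA (fun (_ : 'I_k.-1) (i : 'I_n) =>
  ((i.+1 == r :> nat)%:R * (i == p :> nat)%:R : F))) /= prodr_const card_ord.
rewrite (bigD1 (Ordinal p_lt_n)) //= eqxx mulr1 big1 ?addr0 => [|i /negbTE].
  rewrite eq_sym; case: (_ == _); rewrite ?expr1n // expr0n.
  by case: k k_gt1 => [|[|]].
by rewrite -val_eqE /= => ->; rewrite mulr0.
Qed.

Lemma shift_controllable : controllable (shift_tensor F k n) (first_unit_mx F n m).
Proof.
have unit_row_sub p : (p < n)%N ->
    (unit_row p <= ctrl_space (shift_tensor F k n) (first_unit_mx F n m) p)%MS.
  elim: p => [|p IHp] p_lt_n.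
    rewrite /= genmxE (_ : unit_row 0 = row (Ordinal m_gt0) (first_unit_mx F n m)^T).
      exact: row_sub.
    by apply/rowP => r; rewrite !mxE andbT.
  by rewrite -tapp_shift 1?ltnW //; apply: tapp_ctrl_space => _; exact/IHp/ltnW.
apply/eqP; rewrite eqn_leq rank_leq_col -{1}(mxrank1 F n) mxrankS //.
apply/row_subP => p; rewrite (_ : row p 1%:M = unit_row p); last first.
  by apply/rowP => r; rewrite !mxE eq_sym.
apply: submx_trans (unit_row_sub p (ltn_ord p)) (ctrl_space_le _ _ _).
by rewrite -ltnS (ltn_predK (ltn_ord p)).
Qed.

End Shift.

Definition seg_tensor (R : pzRingType) k n (A A' : tensor R k n) (s : R) : tensor R k n :=
  fun i j => A i j + s * (A' i j - A i j).

Lemma sqrt_sum_sqr_scale (R : rcfType) (I J : finType) (s : R) (x : I -> J -> R) :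
  0 <= s ->
  Num.sqrt (\sum_i \sum_j (s * x i j) ^+ 2) = s * Num.sqrt (\sum_i \sum_j x i j ^+ 2).
Proof.
move=> s_ge0; under eq_bigr do under eq_bigr do rewrite exprMn.
under eq_bigr do rewrite -mulr_sumr.
by rewrite -mulr_sumr sqrtrM ?sqr_ge0 // sqrtr_sqr ger0_norm.
Qed.

Lemma tensor_dist_seg (R : rcfType) k n (A A' : tensor R k n) s : 0 <= s ->
  tensor_dist (seg_tensor A A' s) A = s * tensor_dist A' A.
Proof.
move=> s_ge0; rewrite /tensor_dist -sqrt_sum_sqr_scale //.
congr Num.sqrt; apply: eq_bigr => i _; apply: eq_bigr => j _.
by rewrite /seg_tensor addrAC subrr add0r.
Qed.

Lemma mx_dist_seg (R : rcfType) n m (B B' : 'M[R]_(n, m)) s : 0 <= s ->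
  mx_dist (B + s *: (B' - B)) B = s * mx_dist B' B.
Proof.
move=> s_ge0; rewrite /mx_dist -sqrt_sum_sqr_scale //.
congr Num.sqrt; apply: eq_bigr => i _; apply: eq_bigr => j _.
by rewrite !mxE addrAC subrr add0r.
Qed.

Lemma exists_pos_nonroot_le (R : numFieldType) (p : {poly R}) (d : R) :
  p != 0 -> 0 < d -> exists s, [/\ 0 < s, s <= d & ~~ root p s].
Proof.
move=> p_neq0 d_gt0; set cands := [seq d / i.+1%:R | i <- iota 0 (size p)].
have uniq_cands : uniq cands.
  rewrite map_inj_uniq ?iota_uniq // => i j /(mulfI (lt0r_neq0 d_gt0))/invr_inj/eqP.
  by rewrite eqr_nat eqSS => /eqP.
have /allPn [_ /mapP [i _ ->] nonroot] : ~~ all (root p) cands.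
  apply/negP => roots; have := max_poly_roots p_neq0 roots uniq_cands.
  by rewrite size_map size_iota ltnn.
exists (d / i.+1%:R); split => //; first by rewrite divr_gt0 ?ltr0Sn.
by rewrite ler_pdivrMr ?ltr0Sn // ler_peMr ?ler1n // ltW.
Qed.

Lemma controllable_on_segment (R : numFieldType) k n m (A A' : tensor R k n)
    (B B' : 'M[R]_(n, m)) (d : R) :
  controllable A' B' -> 0 < d ->
  exists s, [/\ 0 < s, s <= d & controllable (seg_tensor A A' s) (B + s *: (B' - B))].
Proof.
move=> /controllable_minorP [f detf] d_gt0.
pose AP := seg_tensor (fun i j => (A i j)%:P) (fun i j => (A' i j)%:P) 'X.
pose BP := map_mx polyC B + 'X *: map_mx polyC (B' - B).
pose P := \det (rowsub f (ctrl_mx AP BP n.-1)).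
have evalP s At Bt : (forall i j, At i j = seg_tensor A A' s i j) ->
    Bt = B + s *: (B' - B) -> P.[s] = \det (rowsub f (ctrl_mx At Bt n.-1)).
  move=> AtE BtE; rewrite -horner_evalE -det_map_mx.
  rewrite (_ : map_mx _ _ = rowsub f (map_mx (horner_eval s) (ctrl_mx AP BP n.-1))).
    rewrite (map_ctrl_mx (A' := At) (B' := Bt)) // => [i j|].
      by rewrite AtE /= horner_evalE /AP /seg_tensor !hornerE.
    by rewrite BtE; apply/matrixP => i j; rewrite !mxE /= horner_evalE !hornerE.
  by apply/matrixP => i j; rewrite !mxE.
have P_neq0 : P != 0.
  apply: contra_neq detf => P0; rewrite -(evalP 1) ?P0 ?horner0 // => [i j|].
    by rewrite /seg_tensor mul1r addrC subrK.
  by rewrite scale1r addrC subrK.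
have [s [s_gt0 s_le_d nonroot]] := exists_pos_nonroot_le P_neq0 d_gt0.
exists s; split => //; apply/controllable_minorP; exists f.
by rewrite -(evalP s).
Qed.

Theorem proposition5 (R : realType) (k n m : nat) (hk : (2 <= k)%N)
  (hkeven : ~~ odd k) (hm : (0 < m)%N)
  (A : tensor R k n) (B : 'M[R]_(n, m)) :
  (controllable A B ->
     exists eps : R, 0 < eps /\
       forall (At : tensor R k n) (Bt : 'M[R]_(n, m)),
         tensor_dist At A < eps -> mx_dist Bt B < eps -> controllable At Bt)
  /\
  (~ controllable A B ->
     forall eps : R, 0 < eps ->
       exists (At : tensor R k n) (Bt : 'M[R]_(n, m)),
         [/\ tensor_dist At A < eps, mx_dist Bt B < eps & controllable At Bt]).
Proof.
split=> [|_ eps eps_gt0]; first exact: controllable_nbhs.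
set A1 := shift_tensor R k n; set B1 := first_unit_mx R n m.
set dA := tensor_dist A1 A; set dB := mx_dist B1 B.
have [dA_ge0 dB_ge0] : 0 <= dA /\ 0 <= dB by split; apply: sqrtr_ge0.
have d_gt0 : 0 < eps / (dA + dB + 1) by rewrite divr_gt0 // ltr_wpDl ?addr_ge0.
have [s [s_gt0 s_le ctrl_s]] :=
  controllable_on_segment A B (shift_controllable R n hk hm) d_gt0.
have s_small x : 0 <= x <= dA + dB -> s * x < eps.
  move=> /andP[x_ge0 x_le]; move: s_le; rewrite ler_pdivlMr ?ltr_wpDl ?addr_ge0 //.
  nra.
exists (seg_tensor A A1 s), (B + s *: (B1 - B)); split => //.
  by rewrite tensor_dist_seg ?ltW // s_small // dA_ge0 lerDl.
by rewrite mx_dist_seg ?ltW // s_small // dB_ge0 lerDr.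
Qed.
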